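(* Let $t\ge1$ and $q\ge2$ be integers. Then $L(tS_{q,q,q})\xrightarrow{\cap} tS_{q-1,q-1,q}$.
   Context: All graphs are finite and simple. For graphs $G_1=(V_1,E_1)$, $G_2=(V_2,E_2)$, $G_1\cap G_2=(V_1\cap V_2, E_1\cap E_2)$. For a graph $G=(V,E)$ and an injective map $\alpha$ on $V$, $G^{\alpha}$ has vertex set $\alpha(V)$ and edge set $\{\{\alpha(v),\alpha(w)\}: \{v,w\}\in E\}$. We write $G\xrightarrow{\cap} H$ if $H$ is (isomorphic to) $G^{\alpha_1}\cap\cdots\cap G^{\alpha_k}$ for some $k\ge1$ and injective maps $\alpha_1,\dots,\alpha_k$ on $V(G)$. For integers $a,b,c\ge1$, $S_{a,b,c}$ is the tree consisting of a vertex of degree $3$ together with three pendant paths having $a$, $b$, $c$ edges respectively; $tS_{a,b,c}$ is the disjoint union of $t$ copies of $S_{a,b,c}$. $L(G)$ denotes the line graph of $G$. *)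

From mathcomp Require Import all_boot.
Set Implicit Arguments. Unset Strict Implicit. Unset Printing Implicit Defensive.

(* A finite simple graph is represented by a finite ambient type T, a vertex
   set A : {set T}, and a (symmetric, irreflexive) adjacency relation e : rel T,
   only its restriction to A being relevant. *)

Definition graph_iso (W U : finType) (B : {set W}) (f : rel W)
    (C : {set U}) (g : rel U) : Prop :=
  exists phi : W -> U,
    [/\ {in B &, injective phi}, phi @: B = C &
        {in B &, forall x y, g (phi x) (phi y) = f x y}].

Definition cap_vert (V U : finType) (A : {set V}) (n : nat)
    (alpha : 'I_n.+1 -> V -> U) : {set U} :=
  [set u | [forall i, u \in alpha i @: A]].

Definition cap_adj (V U : finType) (A : {set V}) (e : rel V) (n : nat)
    (alpha : 'I_n.+1 -> V -> U) : rel U :=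
  fun u w => [forall i, [exists v in A, exists x in A,
                 [&& alpha i v == u, alpha i x == w & e v x]]].

(* G -cap-> H : H is isomorphic to an intersection of k >= 1 injective images
   of G (the maps take values in an arbitrary finite ambient type U). *)
Definition cap_rep (V : finType) (A : {set V}) (e : rel V)
    (W : finType) (B : {set W}) (f : rel W) : Prop :=
  exists (U : finType) (n : nat) (alpha : 'I_n.+1 -> V -> U),
    (forall i, {in A &, injective (alpha i)}) /\
    graph_iso B f (cap_vert A alpha) (cap_adj A e alpha).

(* The spider S_{a,b,c} on 'I_(a+b+c).+1: vertex 0 is the centre, the legs are
   1..a, a+1..a+b, a+b+1..a+b+c (each a path starting next to the centre). *)
Definition spider_base (a b c : nat) (i j : nat) : bool :=
  ((i == 0) && (j \in [:: 1; a.+1; (a + b).+1])) ||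
  ((j == i.+1) && (j \notin [:: 1; a.+1; (a + b).+1])).

Definition spider_adj (a b c : nat) : rel 'I_(a + b + c).+1 :=
  fun i j => spider_base a b c i j || spider_base a b c j i.
Arguments spider_adj : clear implicits.

Definition copies_adj (t : nat) (V : finType) (e : rel V) : rel ('I_t * V) :=
  fun p r => (p.1 == r.1) && e p.2 r.2.

Arguments copies_adj : clear implicits.
Definition tS_adj (t a b c : nat) : rel ('I_t * 'I_(a + b + c).+1) :=
  copies_adj t _ (spider_adj a b c).

Definition line_vert (V : finType) (A : {set V}) (e : rel V) : {set {set V}} :=
  [set E | [exists x in A, exists y in A, e x y && (E == [set x; y])]].

Definition line_adj (V : finType) : rel {set V} :=
  fun E F => (E != F) && (E :&: F != set0).
Arguments tS_adj : clear implicits.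

From mathcomp Require Import all_boot zify.

(* Label every edge of S_{q,q,q} by its endpoint away from the centre; then
   L(S_{q,q,q}) is a graph on the labels 1..3q in which the three edges at the
   centre form a triangle. Sending vertex m of S_{q-1,q-1,q} to label m+1
   (m <= 2q-2) or m+2 embeds S_{q-1,q-1,q} into L(S_{q,q,q}) with exactly one
   spurious adjacency, coming from the triangle: between the first vertices of
   the last two legs. Precomposing with the automorphism exchanging the two legs
   of length q-1 gives a second embedding whose spurious adjacency is a different
   pair, so the adjacencies common to both embeddings are exactly those of
   S_{q-1,q-1,q}. In general, if H embeds into G along k >= 2 injections whose
   common adjacencies are exactly those of H, then G -cap-> H: map each image
   back onto H and send the other vertices of the i-th copy to private points. *)

Set Implicit Arguments. Unset Strict Implicit. Unset Printing Implicit Defensive.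

Section CapOfEmbeddings.

Variables (V W : finType) (A : {set V}) (e : rel V) (B : {set W}) (f : rel W).
Variables (n : nat) (emb : 'I_n.+2 -> W -> V).
Hypothesis emb_inj : forall i, {in B &, injective (emb i)}.
Hypothesis emb_in : forall i x, x \in B -> emb i x \in A.
Hypothesis f_cap : {in B &, forall x y, f x y = [forall i, e (emb i x) (emb i y)]}.

Definition unemb (i : 'I_n.+2) (v : V) : W + V * 'I_n.+2 :=
  if [pick x in B | emb i x == v] is Some x then inl x else inr (v, i).

Lemma unemb_emb i x : x \in B -> unemb i (emb i x) = inl x.
Proof.
move=> xB; rewrite /unemb; case: pickP => [y /andP[yB /eqP/emb_inj->] //|].
by move/(_ x); rewrite xB eqxx.
Qed.

Lemma unemb_inl i v x : unemb i v = inl x -> x \in B /\ emb i x = v.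
Proof. by rewrite /unemb; case: pickP => // y /andP[yB /eqP <-] [<-]. Qed.

Lemma unemb_inj i : injective (unemb i).
Proof.
move=> v w; case Ev: (unemb i v) => [x|[v' j]]; case Ew: (unemb i w) => [y|[w' k]] //.
  by move=> [exy]; have [_ <-] := unemb_inl Ev; have [_ <-] := unemb_inl Ew; rewrite exy.
move: Ev Ew; rewrite /unemb; case: pickP => // _ [<- _]; case: pickP => // _ [<- _].
by case.
Qed.

Lemma cap_vert_unemb : cap_vert A unemb = inl @: B.
Proof.
apply/setP => u; rewrite inE; apply/forallP/imsetP => [uA|[x xB ->] i].
  have [v _ uE] := imsetP (uA ord0); case Eu: (unemb ord0 v) uE => [x|[v' j]] uE; rewrite uE.
    by exists x => //; case: (unemb_inl Eu).
  pose k : 'I_n.+2 := if j == ord0 then ord_max else ord0.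
  have [w _] := imsetP (uA k); rewrite uE /unemb; case: pickP => [? _ //|_ [_ ekj]].
  by move: ekj; rewrite /k; case: eqP => [->|/eqP jn0 k0] //; rewrite -k0 eqxx in jn0.
by apply/imsetP; exists (emb i x); rewrite ?emb_in ?unemb_emb.
Qed.

Lemma cap_adj_unemb x y : x \in B -> y \in B ->
  cap_adj A e unemb (inl x) (inl y) = f x y.
Proof.
move=> xB yB; rewrite f_cap //; apply: eq_forallb => i.
apply/exists_inP/idP => [[v _ /exists_inP[w _ /and3P[/eqP Ev /eqP Ew evw]]]|exy].
  by have [_ ->] := unemb_inl Ev; have [_ ->] := unemb_inl Ew.
exists (emb i x); rewrite ?emb_in //; apply/exists_inP; exists (emb i y); rewrite ?emb_in //.
by rewrite !unemb_emb // !eqxx.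
Qed.

Lemma cap_rep_of_embeddings : cap_rep A e B f.
Proof.
exists (W + V * 'I_n.+2)%type, n.+1, unemb; split=> [i v w _ _|].
  exact: unemb_inj.
exists inl; split; first by move=> x y _ _ [].
  by rewrite cap_vert_unemb.
by move=> x y xB yB; rewrite cap_adj_unemb.
Qed.

End CapOfEmbeddings.

Section SpiderLabels.

Variables a b : nat.

(* The centre 0 is its own (junk) parent. *)
Definition spider_parent (j : nat) : nat :=
  if j \in [:: 1; a.+1; (a + b).+1] then 0 else j.-1.

Definition spider_rel (x y : nat) : bool :=
  (0 < y) && (x == spider_parent y) || (0 < x) && (y == spider_parent x).

(* Adjacency of L(S_{a,b,c}), an edge being labelled by its endpoint away from the centre. *)
Definition label_adj (x y : nat) : bool :=
  (x != y) && [|| x == spider_parent y, spider_parent x == y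
                | spider_parent x == spider_parent y].

Lemma spider_parent_le j : spider_parent j <= j.
Proof. by rewrite /spider_parent; case: ifP; lia. Qed.

Lemma spider_parent_lt j : 0 < j -> spider_parent j < j.
Proof. by rewrite /spider_parent; case: ifP; lia. Qed.

Lemma spider_adjE c i j : spider_adj a b c i j = spider_rel i j.
Proof.
suff base x y : spider_base a b c x y = (0 < y) && (x == spider_parent y).
  by rewrite /spider_adj !base.
by rewrite /spider_base /spider_parent !inE; case: ifP; lia.
Qed.

End SpiderLabels.

Section ParentEdges.

Variables t a b c : nat.
Local Notation vertex := ('I_t * 'I_(a + b + c).+1)%type.

Definition parent_edge (l : vertex) : {set vertex} :=
  [set (l.1, inord (spider_parent a b l.2)); l].

Lemma vertex_eqE (z l : vertex) :
  (z == l) = (z.1 == l.1 :> nat) && (z.2 == l.2 :> nat).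
Proof. by case: z l => [? ?] [? ?]. Qed.

Lemma parent_inordK (l : vertex) :
  (inord (spider_parent a b l.2) : 'I_(a + b + c).+1) = spider_parent a b l.2 :> nat.
Proof. by rewrite inordK // ltnS (leq_trans (spider_parent_le _ _ _)) // -ltnS. Qed.

Lemma in_parent_edge (l z : vertex) : (z \in parent_edge l) =
  (z.1 == l.1 :> nat) && (z.2 == spider_parent a b l.2 :> nat) || (z == l).
Proof. by rewrite !inE [z == (_, _)]vertex_eqE /= parent_inordK. Qed.

Lemma parent_edge_inj (l1 l2 : vertex) : 0 < l1.2 -> 0 < l2.2 ->
  parent_edge l1 = parent_edge l2 -> l1 = l2.
Proof.
move=> pos1 pos2 E.
have: l1 \in parent_edge l2 by rewrite -E set22.
have: l2 \in parent_edge l1 by rewrite E set22.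
rewrite !in_parent_edge => /orP[/andP[_ /eqP e2]|/eqP -> //].
case/orP=> [/andP[_ /eqP e1]|/eqP //].
by have := spider_parent_lt a b pos1; have := spider_parent_lt a b pos2; lia.
Qed.

Lemma parent_edge_line (l : vertex) : 0 < l.2 ->
  parent_edge l \in line_vert [set: vertex] (tS_adj t a b c).
Proof.
move=> pos; rewrite inE; apply/existsP; exists (l.1, inord (spider_parent a b l.2)).
rewrite inE; apply/existsP; exists l; rewrite inE eqxx andbT.
by rewrite /tS_adj /copies_adj /= eqxx spider_adjE /spider_rel pos parent_inordK eqxx.
Qed.

Lemma line_adj_parent_edge (l1 l2 : vertex) : 0 < l1.2 -> 0 < l2.2 ->
  line_adj (parent_edge l1) (parent_edge l2) =
  (l1.1 == l2.1) && label_adj a b l1.2 l2.2.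
Proof.
move=> pos1 pos2; rewrite /line_adj /label_adj.
have -> : (parent_edge l1 != parent_edge l2) = (l1 != l2).
  by apply/idP/idP; apply: contra => /eqP; [move-> | move/parent_edge_inj->].
have -> : (parent_edge l1 :&: parent_edge l2 != set0) =
  (l1.1 == l2.1 :> nat) && [|| l1.2 == spider_parent a b l2.2 :> nat,
     spider_parent a b l1.2 == l2.2, spider_parent a b l1.2 == spider_parent a b l2.2
   | l1.2 == l2.2 :> nat].
  apply/set0Pn/idP => [[z]|/andP[e1 /or4P[e|e|e|e]]].
  - by rewrite inE !in_parent_edge !vertex_eqE; lia.
  - by exists l1; rewrite inE !in_parent_edge !vertex_eqE; lia.
  - by exists l2; rewrite inE !in_parent_edge !vertex_eqE; lia.
  - exists (l1.1, inord (spider_parent a b l1.2)).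
    by rewrite inE !in_parent_edge !vertex_eqE /= parent_inordK; lia.
  - by exists l1; rewrite inE !in_parent_edge !vertex_eqE; lia.
have -> : (l1.1 == l2.1) = (l1.1 == l2.1 :> nat) by [].
by rewrite vertex_eqE; lia.
Qed.

End ParentEdges.

Definition swap_legs (a m : nat) : nat :=
  if 0 < m <= a then m + a else if a < m <= a + a then m - a else m.

Lemma swap_legsK a : involutive (swap_legs a).
Proof.
move=> m; rewrite {2}/swap_legs; case: (posnP m) => [->|m0] //=.
case: leqP => ma /=; last case: leqP => m2a /=.
all: by rewrite /swap_legs; repeat case: ifP => ?; lia.
Qed.

Lemma swap_legs_gt0 a m : (0 < swap_legs a m) = (0 < m).
Proof. by rewrite /swap_legs; repeat case: ifP => ?; lia. Qed.

Lemma leq_swap_legs a m n : a + a <= n -> (swap_legs a m <= n) = (m <= n).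
Proof. by rewrite /swap_legs; repeat case: ifP => ?; lia. Qed.

Lemma spider_parent_swap a m :
  spider_parent a a (swap_legs a m) = swap_legs a (spider_parent a a m).
Proof.
rewrite {1}/swap_legs; case: (posnP m) => [->|m0] /=.
  by rewrite /spider_parent /swap_legs !inE.
case: leqP => ma /=; last case: leqP => m2a /=; rewrite /spider_parent !inE.
all: by repeat case: ifP => ?; rewrite /swap_legs /=; repeat case: ifP => ?; lia.
Qed.

Lemma spider_rel_swap a m m' :
  spider_rel a a (swap_legs a m) (swap_legs a m') = spider_rel a a m m'.
Proof.
by rewrite /spider_rel !spider_parent_swap !swap_legs_gt0 !(inj_eq (can_inj (swap_legsK a))).
Qed.

(* Vertex m of S_{q-1,q-1,q} goes to the edge of S_{q,q,q} labelled embed_label q m;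
   the label 2q (last edge of the second leg) is skipped. *)
Definition embed_label (q m : nat) : nat := if m <= q + q - 2 then m.+1 else m.+2.

(* The images of the first vertices q and 2q-1 of the last two legs of
   S_{q-1,q-1,q} lie on the triangle of L(S_{q,q,q}), hence are adjacent there. *)
Definition triangle_edge (q m m' : nat) : bool :=
  (minn m m' == q) && (maxn m m' == q + q - 1).

Lemma embed_label_inj q : injective (embed_label q).
Proof. by move=> m m'; rewrite /embed_label; do 2 case: ifP => ?; lia. Qed.

Lemma embed_label_cases q m : 2 <= q ->
  [\/ [/\ m = 0, spider_parent q q (embed_label q m) = 0, embed_label q m = 1
                & spider_parent q.-1 q.-1 m = 0],
      [/\ (0 < m < q) || (q < m < q + q - 1), spider_parent q q (embed_label q m) = m,
          embed_label q m = m.+1 & spider_parent q.-1 q.-1 m = m.-1],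
      [/\ q + q <= m, spider_parent q q (embed_label q m) = m.+1,
          embed_label q m = m.+2 & spider_parent q.-1 q.-1 m = m.-1]
    | [/\ m = q, spider_parent q q (embed_label q m) = 0, embed_label q m = q.+1
                & spider_parent q.-1 q.-1 m = 0]
      \/ [/\ m = q + q - 1, spider_parent q q (embed_label q m) = 0,
             embed_label q m = (q + q).+1 & spider_parent q.-1 q.-1 m = 0]].
Proof.
move=> hq.
have [->|m0] := eqVneq m 0; [constructor 1 | have [->|mq] := eqVneq m q];
  [|constructor 4; left | have [->|m2q] := eqVneq m (q + q - 1)];
  [| |constructor 4; right | have [mtail|mleg] := leqP (q + q) m; [constructor 3 | constructor 2]].
all: rewrite /embed_label; try case: ifP => ?; rewrite /spider_parent !inE.
all: by split=> //; repeat case: ifP => ?; lia.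
Qed.

Lemma label_adj_embed q m m' : 2 <= q ->
  label_adj q q (embed_label q m) (embed_label q m') =
  spider_rel q.-1 q.-1 m m' || triangle_edge q m m'.
Proof.
move=> hq; rewrite /label_adj /spider_rel /triangle_edge.
case: (@embed_label_cases q m hq)
  => [[r -> -> ->]|[r -> -> ->]|[r -> -> ->]|[[r -> -> ->]|[r -> -> ->]]];
by case: (@embed_label_cases q m' hq)
  => [[r' -> -> ->]|[r' -> -> ->]|[r' -> -> ->]|[[r' -> -> ->]|[r' -> -> ->]]]; lia.
Qed.

Lemma triangle_edge_swap q m m' : 2 <= q ->
  triangle_edge q (swap_legs q.-1 m) (swap_legs q.-1 m') -> ~~ triangle_edge q m m'.
Proof.
move=> hq; rewrite /triangle_edge /swap_legs.
by repeat case: ifP => ?; lia.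
Qed.

Lemma spider_rel_embed_swap q m m' : 2 <= q ->
  spider_rel q.-1 q.-1 m m' =
  label_adj q q (embed_label q m) (embed_label q m') &&
  label_adj q q (embed_label q (swap_legs q.-1 m)) (embed_label q (swap_legs q.-1 m')).
Proof.
move=> hq; rewrite !label_adj_embed // spider_rel_swap.
case: spider_rel => //=.
case Eswap: (triangle_edge q (swap_legs q.-1 m) _); last by rewrite andbF.
by rewrite (negbTE (triangle_edge_swap hq Eswap)).
Qed.

Definition twin_label (q : nat) (i : 'I_2) (m : nat) : nat :=
  embed_label q (if i == ord0 then m else swap_legs q.-1 m).

Lemma twin_label_gt0 q i m : 0 < twin_label q i m.
Proof. by rewrite /twin_label /embed_label; case: ifP. Qed.

Lemma twin_label_lt q i m : 2 <= q -> m < (q.-1 + q.-1 + q).+1 ->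
  twin_label q i m < (q + q + q).+1.
Proof.
move=> hq hm; rewrite /twin_label; set k := (if _ then _ else _).
have hk : k <= q.-1 + q.-1 + q by rewrite /k; case: ifP => _; rewrite ?leq_swap_legs; lia.
by rewrite /embed_label; case: ifP => ?; lia.
Qed.

Lemma twin_label_inj q i : injective (twin_label q i).
Proof.
move=> m m' /embed_label_inj; case: ifP => // _.
exact: can_inj (swap_legsK q.-1) m m'.
Qed.

Lemma spider_rel_twin_label q m m' : 2 <= q ->
  spider_rel q.-1 q.-1 m m' =
  [forall i, label_adj q q (twin_label q i m) (twin_label q i m')].
Proof.
move=> hq; rewrite spider_rel_embed_swap //.
apply/andP/forallP => [[adj0 adj1] [[|[|//]] i2] | adj]; first exact: adj0; first exact: adj1.
exact: conj (adj ord0) (adj ord_max).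
Qed.

Theorem mainTheorem11 (t q : nat) (ht : 1 <= t) (hq : 2 <= q) :
  cap_rep (line_vert [set: ('I_t * 'I_(q + q + q).+1)%type] (tS_adj t q q q))
          (@line_adj ('I_t * 'I_(q + q + q).+1)%type)
          [set: ('I_t * 'I_(q.-1 + q.-1 + q).+1)%type] (tS_adj t q.-1 q.-1 q).
Proof.
pose lab i (x : 'I_t * 'I_(q.-1 + q.-1 + q).+1) : 'I_t * 'I_(q + q + q).+1 :=
  (x.1, inord (twin_label q i x.2)).
have labK i x : (lab i x).2 = twin_label q i x.2 :> nat.
  by rewrite inordK // twin_label_lt.
have lab_gt0 i x : 0 < (lab i x).2 by rewrite labK twin_label_gt0.
apply: (@cap_rep_of_embeddings _ _ _ _ _ _ 0 (fun i x => parent_edge (lab i x))).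
- move=> i x y _ _ /(parent_edge_inj (lab_gt0 i x) (lab_gt0 i y)) lab_xy.
  have /twin_label_inj e2 : twin_label q i x.2 = twin_label q i y.2 by rewrite -!labK lab_xy.
  by case: x y lab_xy e2 => [? ?] [? ?] /= [-> _] /val_inj ->.
- by move=> i x _; apply/parent_edge_line.
move=> x y _ _ /=; rewrite /tS_adj /copies_adj spider_adjE spider_rel_twin_label //.
have adjE i : line_adj (parent_edge (lab i x)) (parent_edge (lab i y)) =
    (x.1 == y.1) && label_adj q q (twin_label q i x.2) (twin_label q i y.2).
  by rewrite line_adj_parent_edge // !labK.
rewrite (eq_forallb adjE).
by case: eqP => _ //=; apply/esym/forallP => /(_ ord0).
Qed.
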